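(* Let $G=(V,E)$ be a $k$-uniform cored hypergraph ($k\ge3$) and let $\mathbf x\in\mathbb R^n$ be an H-eigenvector of its Laplacian tensor $\mathcal L$ corresponding to an H-eigenvalue $\lambda\ge1$. For each $e\in E$ let $i_e\in e$ be a cored vertex. Then $\prod_{s\in e}x_s\le0$ for all $e\in E$ when $k$ is even, and $\prod_{s\in e\setminus\{i_e\}}x_s\le0$ for all $e\in E$ when $k$ is odd.
   Context: A $k$-uniform hypergraph $G=(V,E)$ has $V=[n]$ and a nonempty set $E$ of $k$-element subsets of $V$; $d_i$ is the number of edges containing $i$. A cored vertex is a vertex of degree one; $G$ is cored if every edge contains a cored vertex. The Laplacian tensor $\mathcal L=\mathcal D-\mathcal A$ ($\mathcal D$ diagonal with entries $d_i$, $\mathcal A$ with entries $\frac1{(k-1)!}$ at index tuples forming an edge and $0$ otherwise) satisfies $(\mathcal L\mathbf x^{k-1})_i=d_ix_i^{k-1}-\sum_{e\in E,\,i\in e}\prod_{s\in e\setminus\{i\}}x_s$. A real $\lambda$ is an H-eigenvalue with H-eigenvector $\mathbf x\neq0$ if $(\mathcal L\mathbf x^{k-1})_i=\lambda x_i^{k-1}$ for all $i$. *)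

From mathcomp Require Import all_boot all_order all_algebra.
Set Implicit Arguments. Unset Strict Implicit. Unset Printing Implicit Defensive.
Import Order.TTheory GRing.Theory Num.Theory.
Local Open Scope ring_scope.

Definition uniform_hypergraph (n k : nat) (E : {set {set 'I_n}}) : Prop :=
  E != set0 /\ forall e, e \in E -> #|e| = k.

Definition hdeg (n : nat) (E : {set {set 'I_n}}) (i : 'I_n) : nat :=
  #|[set e in E | i \in e]|.

Definition cored_vertex (n : nat) (E : {set {set 'I_n}}) (i : 'I_n) : Prop :=
  hdeg E i = 1%N.

Definition cored (n : nat) (E : {set {set 'I_n}}) : Prop :=
  forall e, e \in E -> exists2 i, i \in e & cored_vertex E i.

(* (L x^{k-1})_i = d_i x_i^{k-1} - sum_{e in E, i in e} prod_{s in e \ {i}} x_s *)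
Definition laplacian_apply (R : pzRingType) (n k : nat) (E : {set {set 'I_n}})
  (x : 'I_n -> R) (i : 'I_n) : R :=
  (hdeg E i)%:R * x i ^+ k.-1
  - \sum_(e in E | i \in e) \prod_(s in e :\ i) x s.

Definition H_eigenpair (R : pzRingType) (n k : nat) (E : {set {set 'I_n}})
  (lambda : R) (x : 'I_n -> R) : Prop :=
  (exists i, x i != 0) /\
  forall i, laplacian_apply k E x i = lambda * x i ^+ k.-1.

From mathcomp Require Import all_boot all_order all_algebra.
Set Implicit Arguments. Unset Strict Implicit. Unset Printing Implicit Defensive.
Import Order.TTheory GRing.Theory Num.Theory.
Local Open Scope ring_scope.

(* At a cored vertex i of an edge e the eigen-equation has a single summand, so
   it reads prod_{s in e \ i} x_s = (1 - lambda) x_i^(k-1).  For lambda >= 1 this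
   is nonpositive as soon as k - 1 is even; for even k, multiplying by x_i gives
   prod_{s in e} x_s = (1 - lambda) x_i^k <= 0. *)

Lemma cored_vertex_edges (n : nat) (E : {set {set 'I_n}}) (e : {set 'I_n})
    (i : 'I_n) :
  e \in E -> i \in e -> cored_vertex E i -> [set e' in E | i \in e'] = [set e].
Proof.
move=> eE ie /eqP /cards1P [a Ha].
have : e \in [set e' in E | i \in e'] by rewrite inE eE ie.
by rewrite Ha inE => /eqP ->.
Qed.

Lemma laplacian_apply_cored (R : pzRingType) (n k : nat)
    (E : {set {set 'I_n}}) (x : 'I_n -> R) (e : {set 'I_n}) (i : 'I_n) :
  e \in E -> i \in e -> cored_vertex E i ->
  laplacian_apply k E x i = x i ^+ k.-1 - \prod_(s in e :\ i) x s.
Proof.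
move=> eE ie cv; rewrite /laplacian_apply.
have -> : \sum_(e' in E | i \in e') \prod_(s in e' :\ i) x s
        = \sum_(e' in [set e' in E | i \in e']) \prod_(s in e' :\ i) x s.
  by apply: eq_bigl => e'; rewrite inE.
by rewrite (cored_vertex_edges eE ie cv) big_set1 cv mul1r.
Qed.

Lemma H_eigenpair_cored_prod (R : pzRingType) (n k : nat)
    (E : {set {set 'I_n}}) (lambda : R) (x : 'I_n -> R) (e : {set 'I_n})
    (i : 'I_n) :
  H_eigenpair k E lambda x -> e \in E -> i \in e -> cored_vertex E i ->
  \prod_(s in e :\ i) x s = (1 - lambda) * x i ^+ k.-1.
Proof.
move=> [_ eig] eE ie cv; have := eig i.
rewrite (laplacian_apply_cored _ _ eE ie cv) mulrBl mul1r => <-.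
by rewrite opprB addrC subrK.
Qed.

Theorem lemma3p3 (R : realFieldType) (n k : nat) (E : {set {set 'I_n}})
  (lambda : R) (x : 'I_n -> R) (ie : {set 'I_n} -> 'I_n) :
  (3 <= k)%N ->
  uniform_hypergraph k E ->
  cored E ->
  H_eigenpair k E lambda x ->
  1 <= lambda ->
  (forall e, e \in E -> ie e \in e /\ cored_vertex E (ie e)) ->
  (~~ odd k -> forall e, e \in E -> \prod_(s in e) x s <= 0) /\
  (odd k -> forall e, e \in E -> \prod_(s in e :\ ie e) x s <= 0).
Proof.
move=> k3 _ _ eig lambda_ge1 ie_cored.
have coef_le0 : 1 - lambda <= 0 by rewrite subr_le0.
have k_gt0 : (0 < k)%N by apply: leq_trans k3.
split=> [k_even | k_odd] e eE; have [ie_e cv] := ie_cored e eE.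
- rewrite (big_setD1 (ie e)) //= (H_eigenpair_cored_prod eig eE ie_e cv).
  rewrite mulrCA -exprS prednK //.
  exact: mulr_le0_ge0 coef_le0 (exprn_even_ge0 _ k_even).
- rewrite (H_eigenpair_cored_prod eig eE ie_e cv).
  apply: mulr_le0_ge0 coef_le0 (exprn_even_ge0 _ _).
  by rewrite -subn1 oddB // k_odd.
Qed.
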